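(* Let $G=(V,E)$ be a graph with vertex set $V=\{1,\ldots,n\}$. Let $G'$ be the digraph obtained by orienting each edge $\{i,j\}$ as the arc $(\min\{i,j\},\max\{i,j\})$. For each vertex $i$ let $n_i$ be its number of outgoing arcs in $G'$, let $\hat n_i=0$ if $n_i=0$ and $\hat n_i=\lceil\log n_i\rceil$ otherwise, and let $q=\sum_{i=1}^n\hat n_i$. Let $x_1,\ldots,x_q$ be distinct indeterminates, partitioned into consecutive blocks, the $i$-th block consisting of $\hat n_i$ indeterminates $x_{s_i+1},\ldots,x_{s_i+\hat n_i}$ where $s_i=\sum_{h<i}\hat n_h$. Label the outgoing arcs of vertex $i$ as follows: if $n_i=1$, its unique outgoing arc is labeled $1$; if $n_i\ge 2$, its $n_i$ outgoing arcs are labeled by pairwise distinct monomials of the form $\prod_{h=1}^{\hat n_i}x_{s_i+h}^{a_h}$ with each $a_h\in\{0,1\}$. Let $f_{i,j}$ denote the label of arc $(i,j)$, and let $Q(x_1,\ldots,x_q)$ be the polynomial obtained from $\mathrm{Pf}(G)$ by replacing each indeterminate $y_{i,j}$ by $f_{i,j}$. Then $G$ has a perfect matching if and only if $Q(x_1,\ldots,x_q)\not\equiv 0$.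
   Context: $\log$ is to base 2. A perfect matching of $G$ is a set $L$ of edges such that every vertex is incident to exactly one edge of $L$. For each edge $\{i,j\}$ with $i<j$ there is an indeterminate $y_{i,j}$. For a perfect matching $L=\{\{i_1,j_1\},\ldots,\{i_{n/2},j_{n/2}\}\}$ written with $i_r<j_r$ for all $r$ and $i_1<i_2<\cdots<i_{n/2}$, let $\pi(L)=y_{i_1,j_1}\cdots y_{i_{n/2},j_{n/2}}$ and let $\sigma(L)\in\{1,-1\}$ be the sign of the permutation $1\mapsto i_1,2\mapsto j_1,\ldots,n-1\mapsto i_{n/2},n\mapsto j_{n/2}$. Then $\mathrm{Pf}(G)=\sum_L\sigma(L)\pi(L)$, the sum over all perfect matchings $L$ of $G$. *)

From HB Require Import structures.
From mathcomp Require Import all_boot all_order all_algebra all_fingroup.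
From mathcomp Require Import mpoly.
Set Implicit Arguments. Unset Strict Implicit. Unset Printing Implicit Defensive.
Import Order.TTheory GRing.Theory Num.Theory.
Local Open Scope ring_scope.

(* Vertices {1..n} are represented by 'I_n = {0..n-1} (same order).
   A graph is a symmetric irreflexive relation e on 'I_n. *)
Section Defs.
Variables (n : nat) (e : rel 'I_n).

(* A perfect matching: a set of edges {i,j}, each recorded as the pair (i,j)
   with i < j, such that every vertex is incident to exactly one of them. *)
Definition perfect_matching (L : {set 'I_n * 'I_n}) : bool :=
  [forall p in L, (p.1 < p.2)%N && e p.1 p.2] &&
  [forall v : 'I_n, #|[set p in L | (p.1 == v) || (p.2 == v)]| == 1%N].

(* The edges of L sorted by their first (smaller) endpoint, and the word
   i_1 j_1 i_2 j_2 ... i_{n/2} j_{n/2}. *)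
Definition pm_word (L : {set 'I_n * 'I_n}) : seq 'I_n :=
  flatten [seq [:: p.1; p.2] |
             p <- sort (fun p q : 'I_n * 'I_n => (p.1 <= q.1)%N) (enum L)].

Definition pm_sign (L : {set 'I_n * 'I_n}) : int :=
  match [pick s : 'S_n | [forall k : 'I_n, s k == nth k (pm_word L) k]] with
  | Some s => (-1) ^+ odd_perm s
  | None => 0
  end.

(* Pf(G) with the indeterminate y_{i,j} (i<j) replaced by y i j in a
   commutative ring R:  sum_L sigma(L) prod_{(i,j) in L} y i j.
   With y i j := f_{i,j} this is the polynomial Q of the paper. *)
Definition pfaffian_at (R : comRingType) (y : 'I_n -> 'I_n -> R) : R :=
  \sum_(L : {set 'I_n * 'I_n} | perfect_matching L)
     (1 *~ pm_sign L) * \prod_(p in L) y p.1 p.2.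

Definition out_arc (i j : 'I_n) : bool := (i < j)%N && e i j.

Definition outdeg (i : 'I_n) : nat := #|[set j | out_arc i j]|.

Definition hatn (i : 'I_n) : nat :=
  if outdeg i == 0%N then 0%N else up_log 2 (outdeg i).

Definition qdim : nat := (\sum_(i < n) hatn i)%N.
Definition sblock (i : 'I_n) : nat := (\sum_(h < n | (h < i)%N) hatn h)%N.

(* The i-th block of variables: indices s_i, ..., s_i + \hat n_i - 1
   (0-based versions of x_{s_i+1}, ..., x_{s_i+\hat n_i}). *)
Definition in_block (i : 'I_n) (k : 'I_qdim) : bool :=
  (sblock i <= k)%N && (k < sblock i + hatn i)%N.

Definition valid_labeling (f : 'I_n -> 'I_n -> {mpoly int[qdim]}) : Prop :=
  forall i : 'I_n,
    (outdeg i = 1%N -> forall j, out_arc i j -> f i j = 1) /\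
    ((2 <= outdeg i)%N ->
       (forall j, out_arc i j ->
          exists a : 'I_qdim -> bool,
            f i j = \prod_(k : 'I_qdim | in_block i k) 'X_k ^+ a k) /\
       (forall j j', out_arc i j -> out_arc i j' -> j != j' -> f i j != f i j')).

End Defs.

From HB Require Import structures.
From mathcomp Require Import all_boot all_order all_algebra all_fingroup.
From mathcomp Require Import mpoly.
From mathcomp Require Import zify.
Import Order.TTheory GRing.Theory Num.Theory.
Local Open Scope ring_scope.
Set Implicit Arguments. Unset Strict Implicit.

(* Every label of an arc leaving i is a monomial in the i-th block of variables,
   so the term of a perfect matching L in Q is sigma(L) x^mu(L) for a single
   monomial mu(L), and sigma(L) = +-1 because the word i_1 j_1 ... of L is a
   permutation.  The map L |-> mu(L) is injective: scanning vertices upwards, a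
   vertex i is either matched to a smaller vertex, whose edge is already known,
   or it is the smaller endpoint of its edge (i, j), and then the i-block of
   mu(L) is the label of (i, j), which determines j because the arcs leaving i
   carry distinct labels.  So no two terms of Q cancel. *)

Lemma leq_partial_sum n (w : 'I_n -> nat) (i i' : 'I_n) : (i < i')%N ->
  (\sum_(h < n | (h < i)%N) w h + w i <= \sum_(h < n | (h < i')%N) w h)%N.
Proof.
move=> lt_ii'; rewrite [leqRHS](bigID (fun h : 'I_n => (h < i)%N)) /=.
apply: leq_add.
  apply/eq_leq/eq_bigl => h.
  by apply/esym/andb_idl => /ltn_trans; apply.
by rewrite (bigD1 i) ?lt_ii' ?ltnn //= leq_addr.
Qed.

Lemma in_block_inj n (e : rel 'I_n) (i i' : 'I_n) (k : 'I_(qdim e)) :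
  in_block i k -> in_block i' k -> i = i'.
Proof.
rewrite /in_block => /andP[ik1 ik2] /andP[i'k1 i'k2].
case: (ltngtP i i') => [lt|lt|/val_inj //];
  by have := leq_partial_sum (hatn e) lt; rewrite -/(sblock e i) -/(sblock e i'); lia.
Qed.

Lemma perm_of_nth n (w : seq 'I_n) : uniq w -> (forall v, v \in w) ->
  exists s : 'S_n, forall k, s k = nth k w k.
Proof.
move=> w_uniq w_full.
have w_size : size w = n.
  rewrite -(card_uniqP w_uniq) -[RHS]card_ord.
  by apply: eq_card => v; rewrite w_full.
have nth_inj : injective (fun k : 'I_n => nth k w k).
  move=> k1 k2 /= E; apply/val_inj/eqP.
  rewrite -(nth_uniq k1 _ _ w_uniq) ?w_size ?ltn_ord //.
  by rewrite E (set_nth_default k1 k2) ?w_size.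
by exists (perm nth_inj) => k; rewrite permE.
Qed.

Section PerfectMatching.
Variables (n : nat) (e : rel 'I_n) (L : {set 'I_n * 'I_n}).
Hypothesis hL : perfect_matching e L.

Lemma pm_out_arc p : p \in L -> out_arc e p.1 p.2.
Proof. by case/andP: hL => /forallP /(_ p) /implyP. Qed.

Lemma pm_incident_card v : #|[set p in L | (p.1 == v) || (p.2 == v)]| = 1%N.
Proof. by case/andP: hL => _ /forallP /(_ v) /eqP. Qed.

Lemma pm_cover v : exists2 p, p \in L & (p.1 == v) || (p.2 == v).
Proof.
have /eqP/cards1P[x Ex] := pm_incident_card v.
have : x \in [set p in L | (p.1 == v) || (p.2 == v)] by rewrite Ex set11.
by rewrite inE => /andP[xL xv]; exists x.
Qed.

Lemma pm_incident_uniq v p p' : p \in L -> p' \in L ->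
  (p.1 == v) || (p.2 == v) -> (p'.1 == v) || (p'.2 == v) -> p = p'.
Proof.
move=> pL p'L pv p'v; have /eqP/cards1P[x Ex] := pm_incident_card v.
have : p \in [set p in L | (p.1 == v) || (p.2 == v)] by rewrite inE pL.
have : p' \in [set p in L | (p.1 == v) || (p.2 == v)] by rewrite inE p'L.
by rewrite Ex !inE => /eqP -> /eqP ->.
Qed.

Lemma pm_word_uniq : uniq (pm_word L).
Proof.
apply: (@allpairs_uniq_dep _ (fun=> 'I_n) _ (fun _ x => x) _
  (fun p => [:: p.1; p.2])).
- by rewrite sort_uniq enum_uniq.
- move=> p; rewrite mem_sort mem_enum => /pm_out_arc /andP[lt _].
  by rewrite /= inE andbT; apply/eqP => /(congr1 val) /eqP; rewrite ltn_eqF.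
move=> _ _ /allpairsPdep[p [x [pL xp ->]]] /allpairsPdep[p' [x' [p'L x'p' ->]]].
move=> /= eq_xx'; subst x'.
rewrite !mem_sort !mem_enum in pL p'L; rewrite !inE ![x == _]eq_sym in xp x'p'.
by rewrite (pm_incident_uniq pL p'L xp x'p').
Qed.

Lemma mem_pm_word v : v \in pm_word L.
Proof.
have [p pL pv] := pm_cover v; apply/flatten_mapP; exists p.
  by rewrite mem_sort mem_enum.
by rewrite !inE ![v == _]eq_sym.
Qed.

Lemma pm_sign_neq0 : pm_sign L != 0.
Proof.
rewrite /pm_sign; case: pickP => [s _|none]; first by rewrite signr_eq0.
have [s s_word] := perm_of_nth pm_word_uniq mem_pm_word.
by move: (none s) => /negP[]; apply/forallP => k; rewrite s_word.
Qed.

End PerfectMatching.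

Section MatchingMonomial.
Variables (n q : nat) (e : rel 'I_n).
Variables (blk : 'I_n -> pred 'I_q) (m : 'I_n -> 'I_n -> 'X_{1.. q}).
Hypothesis blk_inj : forall i i' k, blk i k -> blk i' k -> i = i'.
Hypothesis m_supp : forall i j k, out_arc e i j -> ~~ blk i k -> m i j k = 0%N.
Hypothesis m_inj :
  forall i j j', out_arc e i j -> out_arc e i j' -> m i j = m i j' -> j = j'.

Definition matching_mnm (L : {set 'I_n * 'I_n}) : 'X_{1.. q} :=
  (\sum_(p in L) m p.1 p.2)%MM.

Lemma m_inj_blk i j j' : out_arc e i j -> out_arc e i j' ->
  (forall k, blk i k -> m i j k = m i j' k) -> j = j'.
Proof.
move=> ij ij' eq_blk; apply: (m_inj ij ij'); apply/mnmP => k.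
by case: (boolP (blk i k)) => [/eq_blk // | kNblk]; rewrite !m_supp.
Qed.

Lemma matching_mnm_blk L p k : perfect_matching e L -> p \in L -> blk p.1 k ->
  matching_mnm L k = m p.1 p.2 k.
Proof.
move=> hL pL kp; rewrite mnm_sumE (bigD1 p) //= big1 ?addn0 // => p' /andP[p'L p'Np].
apply: m_supp (pm_out_arc hL p'L) _; apply: contra p'Np => kp'.
by rewrite (pm_incident_uniq hL p'L pL (v := p.1)) ?eqxx // (blk_inj kp' kp) eqxx.
Qed.

Lemma matching_mnm_step L1 L2 (p : 'I_n * 'I_n) :
    perfect_matching e L1 -> perfect_matching e L2 ->
    matching_mnm L1 = matching_mnm L2 ->
    (forall p' : 'I_n * 'I_n, (p'.1 < p.1)%N -> p' \in L2 -> p' \in L1) ->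
  p \in L1 -> p \in L2.
Proof.
move=> h1 h2 eq12 below pL1; have [p' p'L2] := pm_cover h2 p.1.
case/orP => /eqP p'p.
- suff -> : p = p' by [].
  have p2_p'2 : p.2 = p'.2.
    have arc_p'2 : out_arc e p.1 p'.2 by rewrite -p'p; exact: (pm_out_arc h2 p'L2).
    apply: (m_inj_blk (pm_out_arc h1 pL1) arc_p'2).
    move=> k kp; rewrite -(matching_mnm_blk h1 pL1 kp) eq12.
    by rewrite (matching_mnm_blk h2 p'L2) p'p.
  by rewrite [p]surjective_pairing [p']surjective_pairing p'p p2_p'2.
- have p'L1 : p' \in L1.
    by apply: (below _ _ p'L2); rewrite -p'p; case/andP: (pm_out_arc h2 p'L2).
  by rewrite (pm_incident_uniq h1 pL1 p'L1 (v := p.1)) ?p'p ?eqxx ?orbT.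
Qed.

Lemma matching_mnm_inj L1 L2 : perfect_matching e L1 -> perfect_matching e L2 ->
  matching_mnm L1 = matching_mnm L2 -> L1 = L2.
Proof.
move=> h1 h2 eq12.
have agree i (p : 'I_n * 'I_n) : p.1 = i :> nat -> (p \in L1) = (p \in L2).
  elim/ltn_ind: i p => i IH p pi; apply/idP/idP.
  - by apply: matching_mnm_step h1 h2 eq12 _ => p' lt; rewrite (IH p'.1) // -pi.
  - by apply: matching_mnm_step h2 h1 (esym eq12) _ => p' lt; rewrite -(IH p'.1) // -pi.
by apply/setP => p; apply: agree.
Qed.

Lemma prod_matching_X (R : comNzRingType) (y : 'I_n -> 'I_n -> {mpoly R[q]}) L :
  (forall i j, out_arc e i j -> y i j = 'X_[m i j]) -> perfect_matching e L ->
  \prod_(p in L) y p.1 p.2 = 'X_[matching_mnm L].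
Proof.
by move=> y_X hL; rewrite -mprodXE; apply: eq_bigr => p /(pm_out_arc hL) /y_X.
Qed.

Lemma mcoeff_pfaffian (R : comNzRingType) (y : 'I_n -> 'I_n -> {mpoly R[q]}) L :
  (forall i j, out_arc e i j -> y i j = 'X_[m i j]) -> perfect_matching e L ->
  (pfaffian_at e y)@_(matching_mnm L) = (pm_sign L)%:~R.
Proof.
move=> y_X hL; rewrite /pfaffian_at raddf_sum (bigD1 L) //= [X in _ + X]big1 ?addr0.
  by rewrite (prod_matching_X y_X hL) mulrzl raddfMz /= mcoeffX eqxx.
move=> L' /andP[hL' L'NL]; rewrite (prod_matching_X y_X hL') mulrzl raddfMz /= mcoeffX.
have /negbTE -> : matching_mnm L' != matching_mnm L.
  by apply: contra L'NL => /eqP /(matching_mnm_inj hL' hL) ->.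
by rewrite mul0rz.
Qed.

End MatchingMonomial.

Lemma mnm_sum_supp q (P : pred 'I_q) (a : 'I_q -> nat) k : ~~ P k ->
  (\sum_(k' | P k') U_(k') *+ a k')%MM k = 0%N.
Proof.
move=> NPk; rewrite mnm_sumE big1 // => k' Pk'.
by rewrite mulmnE mnm1E; case: eqP Pk' => // ->; rewrite (negbTE NPk).
Qed.

Lemma outdeg_gt0 n (e : rel 'I_n) i j : out_arc e i j -> (0 < outdeg e i)%N.
Proof. by move=> ij; apply/card_gt0P; exists j; rewrite inE. Qed.

Lemma outdeg1_uniq n (e : rel 'I_n) i j j' : outdeg e i = 1%N ->
  out_arc e i j -> out_arc e i j' -> j = j'.
Proof.
move=> /eqP/cards1P[x Ex] ij ij'.
have : j \in [set j | out_arc e i j] by rewrite inE.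
have : j' \in [set j | out_arc e i j] by rewrite inE.
by rewrite Ex !inE => /eqP -> /eqP ->.
Qed.

Section ValidLabeling.
Variables (n : nat) (e : rel 'I_n) (f : 'I_n -> 'I_n -> {mpoly int[qdim e]}).
Hypothesis hf : valid_labeling f.

Lemma valid_labeling_blk i j : out_arc e i j ->
  exists a : 'I_(qdim e) -> bool, f i j = \prod_(k | in_block i k) 'X_k ^+ a k.
Proof.
move=> ij; have [f1 f2] := hf i.
case: (ltngtP (outdeg e i) 1) => [|/f2[/(_ j ij) //] _|/f1/(_ j ij) ->].
  by rewrite ltnNge (outdeg_gt0 ij).
by exists (fun=> false); rewrite big1.
Qed.

Lemma valid_labeling_inj i j j' : out_arc e i j -> out_arc e i j' ->
  f i j = f i j' -> j = j'.
Proof.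
move=> ij ij' eq_f; have [_ f2] := hf i.
case: (ltngtP (outdeg e i) 1)
  => [|/f2[_ /(_ j j' ij ij') f_neq]|/outdeg1_uniq/(_ ij ij') //].
  by rewrite ltnNge (outdeg_gt0 ij).
by apply: contraPeq eq_f => /f_neq/eqP.
Qed.

Lemma valid_label_X i j : out_arc e i j -> f i j = 'X_[mlead (f i j)].
Proof. by case/valid_labeling_blk => a ->; rewrite mprodXnE mleadXm. Qed.

Lemma valid_label_supp i j k : out_arc e i j -> ~~ in_block i k ->
  mlead (f i j) k = 0%N.
Proof.
by case/valid_labeling_blk => a ->; rewrite mprodXnE mleadXm; apply: mnm_sum_supp.
Qed.

Lemma valid_label_mlead_inj i j j' : out_arc e i j -> out_arc e i j' ->
  mlead (f i j) = mlead (f i j') -> j = j'.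
Proof.
move=> ij ij' eq_lead; apply: (valid_labeling_inj ij ij').
by rewrite (valid_label_X ij) (valid_label_X ij') eq_lead.
Qed.

End ValidLabeling.

Unset Implicit Arguments.

Theorem lemma3p1 (n : nat) (e : rel 'I_n)
    (e_sym : ssrbool.symmetric e) (e_irr : irreflexive e)
    (f : 'I_n -> 'I_n -> {mpoly int[qdim e]})
    (hf : valid_labeling f) :
  (exists L : {set 'I_n * 'I_n}, perfect_matching e L) <->
  pfaffian_at e f != 0.
Proof.
have coeff_pfaffian := mcoeff_pfaffian (@in_block_inj n e) (valid_label_supp hf)
  (valid_label_mlead_inj hf) (valid_label_X hf).
split.
- case=> L hL; apply: contraNneq (pm_sign_neq0 hL) => pf0.
  by have := coeff_pfaffian L hL; rewrite pf0 mcoeff0 intz => <-.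
- move=> pf_neq0; case: (pickP (perfect_matching e)) => [L hL|none]; first by exists L.
  by move: pf_neq0; rewrite /pfaffian_at big_pred0 ?eqxx // => L; apply: none.
Qed.
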